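(* Assume Conditions (i), (ii), (iii). For $s\in S^1$ let $X_s^\omega=X^\omega\cap(\{s\}\times Y^\omega)$; for each connected component $G_s^\omega$ of $X_s^\omega$ let $|G_s^\omega|$ be its largest radius, and let $|G^\omega|$ be the supremum of $|G_s^\omega|$ over all $s\in S^1$ and all connected components $G_s^\omega$ of $X_s^\omega$. Then for every $l>0$, $P(\{\omega:|G^\omega|\ge l\})=0$.
   Context: Setting. $(\Omega,\mathcal F,P,(\theta_t)_{t\in\mathbb R})$ is a metric dynamical system: each $\theta_t:\Omega\to\Omega$ is measurable and $P$-preserving, $\theta_0=\mathrm{id}$, $\theta_{t+u}=\theta_t\circ\theta_u$. $S^1=\mathbb R/\mathbb Z$; distances $|s-s'|$ and intervals $[s-\delta,s+\delta]$ on $S^1$ are taken in the lifted real coordinate. A $C^1$ perfect cocycle is a measurable map $\gamma:\mathbb R\times\Omega\times(S^1\times\mathbb R^d)\to S^1\times\mathbb R^d$, $(t,\omega,z)\mapsto \gamma^\omega_z(t)=\gamma^\omega(t)z$, such that for every $\omega$: $\gamma^\omega(0)=\mathrm{id}$; $\gamma^\omega_z(t_1+t_2)=\gamma^{\theta_{t_1}\omega}_{\gamma^\omega_z(t_1)}(t_2)$ for all $z$, $t_1,t_2$; $(t,z)\mapsto\gamma^\omega_z(t)$ is continuous; each $\gamma^\omega(t)$ is a $C^1$ diffeomorphism. Throughout, $\gamma$ is a $C^1$ perfect cocycle. Condition (i): there are a random compact set $\omega\mapsto Y^\omega\subset\mathbb R^d$ and $t_1>0$ such that for all $s\in S^1$,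 $y\in Y^\omega$, writing $\gamma^\omega_{(s,y)}(t_1)=(s',y')$, the continuous lift of the $S^1$-coordinate along $t\mapsto\gamma^\omega_{(s,y)}(t)$, $t\in[0,t_1]$, increases by exactly $1$ (i.e. $s'=s+1$ in the lift), and $y'\in Y^{\theta_{t_1}\omega}$; moreover there is a random compact set $X^\omega\subset S^1\times Y^\omega$ with $\gamma^\omega(t)X^\omega=X^{\theta_t\omega}$ for all $t\in\mathbb R$, whose projection onto $S^1$ is all of $S^1$, and whose diameter in the $y$-direction is less than a constant $b^*>0$. Notation. $\hat\theta=\theta_{t_1}$ and $\hat\theta^k$ is its $k$-fold iterate ($k\in\mathbb Z$). $H^\omega(s,y):=\gamma^\omega_{(s,y)}(t_1)=(h(s)\bmod 1,g^\omega(s,y))$ with $h(s)=s+1$; $H^{(n),\omega}:=H^{\hat\theta^{n-1}\omega}\circ\dots\circ H^\omega=(h^{(n)}(s)\bmod1,g^{(n),\omega}(s,y))$. Condition (ii): there are $\delta_1>0$, $L_1>0$ such that for every $(s,y)\in X^\omega$ there is a Lipschitz function $f:S^1\to\mathbb R^d$ with constant $L_1$, $f(s)=y$, and $(s^\#,f(s^\#))\in X^\omega$ for all $s^\#\in[s-\delta_1,s+\delta_1]$. For $\varepsilon>0$, $B(X^\omega,\varepsilon):=\{(s,y'):\exists (s,y)\in X^\omega,\ \|y'-y\|\le\varepsilon\}$. Condition (iii): there are $\lambda<1$, $\varepsilon_1>0$, $n_0\in\mathbb N$ such that for a.e. $\omega$, $\|D_yg^{(n_0),\omega}(s,y)\|\le\lambda$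 for all $(s,y)\in B(X^\omega,\varepsilon_1)$, and $c:=\operatorname{ess\,sup}_\omega\sup_{(s,y)\in B(X^\omega,\varepsilon_1)}\|\partial_s g^{(n_0),\omega}(s,y)\|<\infty$. *)

From HB Require Import structures.
From mathcomp Require Import all_boot all_order all_algebra.
From mathcomp Require Import all_classical all_reals all_analysis.
Set Implicit Arguments. Unset Strict Implicit. Unset Printing Implicit Defensive.
Import Order.TTheory GRing.Theory Num.Theory.
Import numFieldNormedType.Exports.
Local Open Scope classical_set_scope.
Local Open Scope ring_scope.

(* Points of the (lifted) cylinder S^1 x R^d : first coordinate is the lifted
   real coordinate of S^1 = R/Z, second coordinate is in R^d = 'rV_d.  All sets
   and maps on S^1 x R^d are represented by their 1-periodic lifts. *)
Definition Pt (R : realType) (d : nat) := (R * 'rV[R]_d)%type.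

Definition enorm (R : realType) (d : nat) (v : 'rV[R]_d) : R :=
  Num.sqrt (\sum_(i < d) (v ord0 i) ^+ 2).

Definition metric_dynamical_system (R : realType) (dO : measure_display)
    (Omega : measurableType dO) (P : probability Omega R)
    (theta : R -> Omega -> Omega) : Prop :=
  (forall t, measurable_fun setT (theta t)) /\
  (forall t (A : set Omega), measurable A -> P (theta t @^-1` A) = P A) /\
  (forall w, theta 0 w = w) /\
  (forall t u w, theta (t + u) w = theta t (theta u w)).

Definition C1map (R : realType) (d : nat) (f : Pt R d -> Pt R d) : Prop :=
  (forall x : Pt R d, differentiable f x) /\
  (forall v : Pt R d, continuous (fun x : Pt R d => 'D_v f x)).

Definition C1_diffeo (R : realType) (d : nat) (f : Pt R d -> Pt R d) : Prop :=
  exists g : Pt R d -> Pt R d,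
    cancel f g /\ cancel g f /\ C1map f /\ C1map g.

(* C^1 perfect cocycle over theta on S^1 x R^d, given through its canonical
   continuous lift Gam (Gam 0 = id, equivariant under s |-> s + 1). *)
Definition C1_perfect_cocycle (R : realType) (d : nat) (dO : measure_display)
    (Omega : measurableType dO) (theta : R -> Omega -> Omega)
    (Gam : R -> Omega -> Pt R d -> Pt R d) : Prop :=
  (* measurability (in omega, for fixed (t,z); joint measurability follows by
     continuity in (t,z)) *)
  (forall t (z : Pt R d),
      measurable_fun setT (fun w => (Gam t w z).1) /\
      forall i : 'I_d, measurable_fun setT (fun w => (Gam t w z).2 ord0 i)) /\
  (forall w z, Gam 0 w z = z) /\
  (forall w z t1 t2, Gam (t1 + t2) w z = Gam t2 (theta t1 w) (Gam t1 w z)) /\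
  (forall w, continuous (fun q : R * Pt R d => Gam q.1 w q.2)) /\
  (forall w t, C1_diffeo (Gam t w)) /\
  (* the map descends to S^1 x R^d *)
  (forall t w s y, Gam t w (s + 1, y) = ((Gam t w (s, y)).1 + 1, (Gam t w (s, y)).2)).

Definition dist_rv (R : realType) (d : nat) (x : 'rV[R]_d) (K : set 'rV[R]_d) : R :=
  inf [set enorm (x - k) | k in K].

(* distance in S^1 x R^d, computed on the periodic lift A *)
Definition dist_cyl (R : realType) (d : nat) (z : Pt R d) (A : set (Pt R d)) : R :=
  inf [set Num.max `|z.1 - p.1| (enorm (z.2 - p.2)) | p in A].

Definition random_compact_rv (R : realType) (d : nat) (dO : measure_display)
    (Omega : measurableType dO) (Y : Omega -> set 'rV[R]_d) : Prop :=
  (forall w, Y w !=set0 /\ compact (Y w)) /\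
  (forall x : 'rV[R]_d, measurable_fun setT (fun w => dist_rv x (Y w))).

(* 1-periodic subsets of R x R^d = lifts of subsets of S^1 x R^d *)
Definition periodic_set (R : realType) (d : nat) (A : set (Pt R d)) : Prop :=
  forall s y, A (s + 1, y) <-> A (s, y).

(* random compact set in S^1 x R^d (given by its lift): the lift is periodic,
   closed and meets the fundamental strip [0,1] x R^d in a compact set *)
Definition random_compact_cyl (R : realType) (d : nat) (dO : measure_display)
    (Omega : measurableType dO) (X : Omega -> set (Pt R d)) : Prop :=
  (forall w, X w !=set0 /\ periodic_set (X w) /\ closed (X w) /\
     compact (X w `&` [set p | 0 <= p.1 <= 1])) /\
  (forall z : Pt R d, measurable_fun setT (fun w => dist_cyl z (X w))).

Fixpoint Hn (R : realType) (d : nat) (Omega : Type) (theta : R -> Omega -> Omega)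
    (Gam : R -> Omega -> Pt R d -> Pt R d) (t1 : R) (n : nat) (w : Omega)
    : Pt R d -> Pt R d :=
  match n with
  | 0 => id
  | n'.+1 => Gam t1 (iter n' (theta t1) w) \o Hn theta Gam t1 n' w
  end.

Definition gn (R : realType) (d : nat) (Omega : Type) (theta : R -> Omega -> Omega)
    (Gam : R -> Omega -> Pt R d -> Pt R d) (t1 : R) (n : nat) (w : Omega)
    (p : Pt R d) : 'rV[R]_d :=
  (Hn theta Gam t1 n w p).2.

Definition Dy (R : realType) (d : nat) (f : Pt R d -> 'rV[R]_d) (p : Pt R d)
    (v : 'rV[R]_d) : 'rV[R]_d :=
  'D_((0, v) : Pt R d) f p.

Definition Ds (R : realType) (d : nat) (f : Pt R d -> 'rV[R]_d) (p : Pt R d)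
    : 'rV[R]_d :=
  'D_((1, 0) : Pt R d) f p.

Definition Bnbhd (R : realType) (d : nat) (A : set (Pt R d)) (eps : R) : set (Pt R d) :=
  [set p | exists y, A (p.1, y) /\ enorm (p.2 - y) <= eps].

Definition cond_i (R : realType) (d : nat) (dO : measure_display)
    (Omega : measurableType dO) (theta : R -> Omega -> Omega)
    (Gam : R -> Omega -> Pt R d -> Pt R d)
    (Y : Omega -> set 'rV[R]_d) (X : Omega -> set (Pt R d)) (t1 bstar : R) : Prop :=
  random_compact_rv Y /\ 0 < t1 /\
  (forall w s y, Y w y ->
      (Gam t1 w (s, y)).1 = s + 1 /\ Y (theta t1 w) (Gam t1 w (s, y)).2) /\
  random_compact_cyl X /\
  (forall w s y, X w (s, y) -> Y w y) /\
  (forall t w, Gam t w @` X w = X (theta t w)) /\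
  (forall w s, exists y, X w (s, y)) /\
  0 < bstar /\
  (forall w p q, X w p -> X w q -> enorm (p.2 - q.2) < bstar).

Definition cond_ii (R : realType) (d : nat) (Omega : Type)
    (X : Omega -> set (Pt R d)) (delta1 L1 : R) : Prop :=
  0 < delta1 /\ 0 < L1 /\
  forall w s y, X w (s, y) ->
    exists f : R -> 'rV[R]_d,
      (forall a, f (a + 1) = f a) /\
      (forall a b, enorm (f a - f b) <= L1 * `|a - b|) /\
      f s = y /\
      (forall s', s - delta1 <= s' <= s + delta1 -> X w (s', f s')).

Definition cond_iii (R : realType) (d : nat) (dO : measure_display)
    (Omega : measurableType dO) (P : probability Omega R)
    (theta : R -> Omega -> Omega) (Gam : R -> Omega -> Pt R d -> Pt R d)
    (X : Omega -> set (Pt R d)) (t1 lam eps1 : R) (n0 : nat) : Prop :=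
  lam < 1 /\ 0 < eps1 /\
  {ae P, forall w, forall p, Bnbhd (X w) eps1 p ->
      forall v : 'rV[R]_d,
        enorm (Dy (gn theta Gam t1 n0 w) p v) <= lam * enorm v} /\
  (exists c : R, {ae P, forall w, forall p, Bnbhd (X w) eps1 p ->
      enorm (Ds (gn theta Gam t1 n0 w) p) <= c}).

Definition fiber (R : realType) (d : nat) (A : set (Pt R d)) (s : R) : set 'rV[R]_d :=
  [set y | A (s, y)].

Definition largest_radius (R : realType) (d : nat) (G : set 'rV[R]_d) : \bar R :=
  ereal_sup [set r | exists y y', G y /\ G y' /\ r = ((enorm (y - y')) / 2)%:E].

Definition Gsize (R : realType) (d : nat) (A : set (Pt R d)) : \bar R :=
  ereal_sup [set r | exists s y, A (s, y) /\
      r = largest_radius (connected_component (fiber A s) y)].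

(* Off a null set, condition (iii) makes each block of [n0] time-[t1] maps
   contract vertical segments of length at most [eps1] near [X] by [lam < 1], so
   [k] blocks contract them by [lam ^+ k].  A connected piece [C] of a fibre of
   [X w] is the image under [H (k n0)] of a connected set [K] of fibre points at
   the past time [w' = theta (- k n0 t1) w].  When [Y w'] lies in the ball of
   radius [rho], any two points of [K] are joined inside [K] by an [eps1]-chain
   whose length is bounded by a number of grid cells depending only on [rho]
   and [eps1]; hence the diameter of [C] is at most that number times
   [lam ^+ k * eps1], which is below [l] for a suitable [k = k rho].  So
   [|G w| >= l] forces, for every [n], [Y (theta (- k n n0 t1) w)] to leave the
   ball of radius [n], an event of the same probability as [Y] leaving it,
   which tends to [0] since [Y] is compact. *)

From HB Require Import structures.
From mathcomp Require Import all_boot all_order all_algebra.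
From mathcomp Require Import all_classical all_reals all_analysis.
From mathcomp Require Import ring lra.
Set Implicit Arguments. Unset Strict Implicit. Unset Printing Implicit Defensive.
Import Order.TTheory GRing.Theory Num.Theory.
Import numFieldNormedType.Exports.
Local Open Scope classical_set_scope.
Local Open Scope ring_scope.

Section EuclideanNorm.
Context {R : realType} {d : nat}.
Implicit Types a b c u : 'rV[R]_d.

Definition vdot a b : R := \sum_(i < d) a ord0 i * b ord0 i.

Lemma vdotC a b : vdot a b = vdot b a.
Proof. by apply: eq_bigr => i _; rewrite mulrC. Qed.

Lemma vdotDl a b c : vdot (a + b) c = vdot a c + vdot b c.
Proof. by rewrite /vdot -big_split; apply: eq_bigr => i _; rewrite mxE mulrDl. Qed.

Lemma vdotNl a c : vdot (- a) c = - vdot a c.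
Proof. by rewrite /vdot -sumrN; apply: eq_bigr => i _; rewrite mxE mulNr. Qed.

Lemma vdotBr a b c : vdot a (b - c) = vdot a b - vdot a c.
Proof. by rewrite !(vdotC a) vdotDl vdotNl. Qed.

Lemma enorm_ge0 a : 0 <= enorm a.
Proof. exact: sqrtr_ge0. Qed.

Lemma enorm_sqr a : enorm a ^+ 2 = vdot a a.
Proof.
rewrite sqr_sqrtr; last by apply: sumr_ge0 => i _; exact: sqr_ge0.
by apply: eq_bigr => i _; rewrite expr2.
Qed.

(* Lagrange's identity: the defect of Cauchy-Schwarz is half a sum of squares. *)
Lemma vdot_sqr_le a b : vdot a b ^+ 2 <= vdot a a * vdot b b.
Proof.
pose D i j := a ord0 i * b ord0 j - a ord0 j * b ord0 i.
have sum_mul (F G : 'I_d -> R) :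
    \sum_i \sum_j F i * G j = (\sum_i F i) * (\sum_j G j).
  by rewrite mulr_suml; apply: eq_bigr => i _; rewrite mulr_sumr.
have Lagrange : \sum_i \sum_j D i j ^+ 2 = 2 * (vdot a a * vdot b b) - 2 * vdot a b ^+ 2.
  transitivity (\sum_i \sum_j
     ((a ord0 i * a ord0 i) * (b ord0 j * b ord0 j)
      + (b ord0 i * b ord0 i) * (a ord0 j * a ord0 j)
      - 2 * ((a ord0 i * b ord0 i) * (a ord0 j * b ord0 j)))).
    by apply: eq_bigr => i _; apply: eq_bigr => j _; rewrite /D; ring.
  under eq_bigr do rewrite sumrB big_split /=.
  rewrite sumrB big_split /= !sum_mul.
  under [X in _ - X]eq_bigr do rewrite -mulr_sumr.
  rewrite -mulr_sumr sum_mul /vdot; ring.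
have : 0 <= \sum_i \sum_j D i j ^+ 2.
  by apply: sumr_ge0 => i _; apply: sumr_ge0 => j _; exact: sqr_ge0.
by rewrite Lagrange subr_ge0 ler_pM2l // ltr0n.
Qed.

Lemma vdot_le_enorm a b : vdot a b <= enorm a * enorm b.
Proof.
have [ab_le0|ab_gt0] := leP (vdot a b) 0.
  by apply: le_trans ab_le0 _; rewrite mulr_ge0 // enorm_ge0.
rewrite -(ler_pXn2r (_ : 0 < 2)%N) ?nnegrE ?(ltW ab_gt0) ?mulr_ge0 ?enorm_ge0 //.
by rewrite exprMn !enorm_sqr vdot_sqr_le.
Qed.

Lemma enormD a b : enorm (a + b) <= enorm a + enorm b.
Proof.
rewrite -(ler_pXn2r (_ : 0 < 2)%N) ?nnegrE ?addr_ge0 ?enorm_ge0 //.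
rewrite enorm_sqr vdotDl !(vdotC _ (a + b)) !vdotDl -!enorm_sqr (vdotC b a).
have := vdot_le_enorm a b; rewrite sqrrD !expr2; nra.
Qed.

Lemma enormN a : enorm (- a) = enorm a.
Proof. by rewrite /enorm; congr Num.sqrt; apply: eq_bigr => i _; rewrite mxE sqrrN. Qed.

Lemma enorm_distC a b : enorm (a - b) = enorm (b - a).
Proof. by rewrite -enormN opprB. Qed.

Lemma enorm_distD a b c : enorm (a - c) <= enorm (a - b) + enorm (b - c).
Proof. by have := enormD (a - b) (b - c); rewrite addrA subrK. Qed.

Lemma enormZ (k : R) a : enorm (k *: a) = `|k| * enorm a.
Proof.
rewrite /enorm -sqrtr_sqr -sqrtrM ?sqr_ge0 //; congr Num.sqrt.
by rewrite mulr_sumr; apply: eq_bigr => i _; rewrite mxE exprMn.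
Qed.

Lemma normr_coord_le_enorm a i : `|a ord0 i| <= enorm a.
Proof.
rewrite /enorm -sqrtr_sqr ler_sqrt; last by apply: sumr_ge0 => j _; exact: sqr_ge0.
by rewrite (bigD1 i) //= lerDl; apply: sumr_ge0 => j _; exact: sqr_ge0.
Qed.

Lemma enorm_le_sum_coord a : enorm a <= \sum_(i < d) `|a ord0 i|.
Proof.
have sqr_sum_ge (n : nat) (F : 'I_n -> R) : (forall i, 0 <= F i) ->
    \sum_(i < n) F i ^+ 2 <= (\sum_(i < n) F i) ^+ 2.
  elim: n F => [|n IH] F F_ge0; first by rewrite !big_ord0 expr0n.
  rewrite !big_ord_recr /=.
  have := IH (fun i => F (widen_ord (leqnSn n) i)) (fun i => F_ge0 _).
  have : 0 <= \sum_(i < n) F (widen_ord (leqnSn n) i) by apply: sumr_ge0.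
  have := F_ge0 ord_max; rewrite !expr2; nra.
rewrite -(ler_pXn2r (_ : 0 < 2)%N) ?nnegrE ?enorm_ge0 ?sumr_ge0 //.
rewrite /enorm sqr_sqrtr; last by apply: sumr_ge0 => j _; exact: sqr_ge0.
under eq_bigr do rewrite -real_normK ?num_real //.
exact: sqr_sum_ge.
Qed.

Lemma enorm_le_mx_norm a : enorm a <= d%:R * `|a|.
Proof.
apply: le_trans (enorm_le_sum_coord a) _.
apply: le_trans (_ : \sum_(i < d) `|a| <= _); last first.
  by rewrite sumr_const card_ord mulr_natl.
apply: ler_sum => i _; rewrite [leRHS]/Num.Def.normr /= mx_normrE.
exact: le_trans (le_bigmax _ _ (ord0, i)).
Qed.

End EuclideanNorm.

Section MeanValueInequality.
Context {R : realType} {d : nat}.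

Lemma is_derive_vdotr (u : 'rV[R]_d) (f : R -> 'rV[R]_d) t :
  derivable f t 1 -> is_derive t 1 (fun s => vdot u (f s)) (vdot u ('D_1 f t)).
Proof.
move=> df.
have -> : (fun s => vdot u (f s)) = \sum_(i < d) (fun s => u ord0 i *: f s ord0 i).
  by apply: funext => s; rewrite fct_sumE.
rewrite /vdot (derive_mx df).
apply: is_derive_sum => i; rewrite mxE; apply: is_deriveZ; apply: derivableP.
by move/derivable_mxP : df; apply.
Qed.

Lemma MVT_enorm (f : R -> 'rV[R]_d) (K : R) :
  (forall t, derivable f t 1) ->
  (forall t, 0 <= t <= 1 -> enorm ('D_1 f t) <= K) ->
  enorm (f 1 - f 0) <= K.
Proof.
(* Scalar mean value theorem for [t |-> vdot u (f t)], with [u = f 1 - f 0]. *)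
move=> df f'_le; set u := f 1 - f 0.
have psi' t := is_derive_vdotr u (df t).
have psi_cont : {within `[0, 1], continuous (fun s => vdot u (f s))}.
  apply: continuous_subspaceT => t; apply: differentiable_continuous.
  by apply/derivable1_diffP; case: (psi' t).
have [c c01 Ec] := MVT_segment ler01 (fun t _ => psi' t) psi_cont.
rewrite in_itv /= in c01; rewrite -vdotBr subr0 mulr1 -/u in Ec.
have u_le : enorm u ^+ 2 <= enorm u * K.
  rewrite enorm_sqr Ec vdotC; apply: le_trans (vdot_le_enorm _ _) _.
  by rewrite mulrC ler_wpM2l ?enorm_ge0 ?f'_le.
have K_ge0 : 0 <= K by apply: le_trans (enorm_ge0 _) (f'_le 0 _); rewrite lexx ler01.
have := enorm_ge0 u; rewrite expr2 in u_le; nra.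
Qed.

End MeanValueInequality.

Section GridCells.
Context {R : realType} {d : nat} (rho h : R).
Hypothesis h_gt0 : 0 < h.

Definition grid_size := Num.truncn (2 * rho / h).
Definition grid_cell := {ffun 'I_d -> 'I_grid_size.+1}.

(* Coordinates are shifted by [rho] so that, on the ball of radius [rho], the
   index [truncn] never overflows and [inord] is injective. *)
Definition cell_of (z : 'rV[R]_d) : grid_cell :=
  [ffun i => inord (Num.truncn ((z ord0 i + rho) / h))].

Lemma enorm_le_same_cell z z' : enorm z <= rho -> enorm z' <= rho ->
  cell_of z = cell_of z' -> enorm (z - z') <= d%:R * h.
Proof.
move=> z_le z'_le /ffunP same.
have coord_le i : `|z ord0 i - z' ord0 i| <= h.
  have index_ge0 x : enorm x <= rho -> 0 <= (x ord0 i + rho) / h.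
    move=> x_le; rewrite divr_ge0 ?(ltW h_gt0) //.
    have := le_trans (normr_coord_le_enorm x i) x_le; rewrite ler_norml; lra.
  have index_lt x : enorm x <= rho ->
      (Num.truncn ((x ord0 i + rho) / h) < grid_size.+1)%N.
    move=> x_le; rewrite ltnS; apply: le_truncn; rewrite ler_pM2r ?invr_gt0 //.
    have := le_trans (normr_coord_le_enorm x i) x_le; rewrite ler_norml; lra.
  move: (same i); rewrite !ffunE => /(congr1 val); rewrite /= !inordK ?index_lt //.
  move: (truncn_itv (index_ge0 _ z_le)) (truncn_itv (index_ge0 _ z'_le)) => + + E.
  rewrite E -natr1 => /andP[lo hi] /andP[lo' hi'].
  have : `|(z ord0 i + rho) / h - (z' ord0 i + rho) / h| <= 1.
    by rewrite ler_norml; apply/andP; split; lra.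
  rewrite -mulrBl normrM [`|h^-1|]gtr0_norm ?invr_gt0 // ler_pdivrMr // mul1r.
  by rewrite opprD addrACA subrr addr0.
apply: le_trans (enorm_le_sum_coord _) _.
apply: le_trans (_ : \sum_(i < d) h <= _); last by rewrite sumr_const card_ord mulr_natl.
by apply: ler_sum => i _; rewrite !mxE.
Qed.

End GridCells.

Section ConnectedChains.
Context {R : realType} {d : nat} (K : set 'rV[R]_d) (rho eps : R).
Hypothesis eps_gt0 : 0 < eps.
Hypothesis K_bounded : forall z, K z -> enorm z <= rho.

Definition chain_mesh := eps / (4 * d.+1%:R).
Local Notation mesh := chain_mesh.
Local Notation cell := (@cell_of R d rho mesh).
Local Notation cells := (@grid_cell R d rho mesh).

Definition ncells : nat := #|{: cells}|.

Lemma ncells_gt0 : (0 < ncells)%N.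
Proof. by apply/card_gt0P; exists [ffun => ord0]. Qed.

Lemma chain_mesh_gt0 : 0 < mesh.
Proof. by rewrite divr_gt0 // mulr_gt0 // ltr0n. Qed.

Lemma chain_mesh_le : d%:R * mesh <= eps / 4.
Proof.
have D_gt0 : 0 < d.+1%:R :> R by rewrite ltr0n.
have -> : d%:R * mesh = eps / 4 * (d%:R / d.+1%:R).
  by rewrite /chain_mesh; field; rewrite lt0r_neq0.
by rewrite ger_pMr ?divr_gt0 // ler_pdivrMr // mul1r ler_nat.
Qed.

Lemma enorm_le_cell z z' : K z -> K z' -> cell z = cell z' -> enorm (z - z') <= eps / 4.
Proof.
move=> Kz Kz' E.
have := enorm_le_same_cell chain_mesh_gt0 (K_bounded Kz) (K_bounded Kz') E.
by move/le_trans; apply; exact: chain_mesh_le.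
Qed.

(* Adjacency of cells depends only on the cells themselves, so chains of cells
   can be shortened to duplicate-free ones, of length at most the number of
   cells. *)
Definition cell_adj : rel cells := fun c c' =>
  `[< exists a b, [/\ K a, K b, cell a = c, cell b = c' & enorm (b - a) <= eps / 2] >].

Lemma connect_cell_adj p : connected K -> K p ->
  forall q, K q -> connect cell_adj (cell p) (cell q).
Proof.
move=> K_conn Kp.
pose T := [set z | K z /\ connect cell_adj (cell p) (cell z)].
have T_near y z : K y -> T z -> enorm (y - z) <= eps / 2 -> T y.
  move=> Ky [Kz pz] yz; split=> //; apply: connect_trans pz (connect1 _).
  by apply/asboolP; exists z, y; split.
have ball_near (y z : 'rV[R]_d) : ball z mesh y -> enorm (y - z) <= eps / 2.
  rewrite -ball_normE /ball_ /= => /ltW /(ler_wpM2l (ler0n _ d)) zy.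
  rewrite enorm_distC; apply: le_trans (enorm_le_mx_norm _) _.
  have quarter_le_half : eps / 4 <= eps / 2 by have := eps_gt0; lra.
  exact: le_trans zy (le_trans chain_mesh_le quarter_le_half).
have TK : T = K.
  apply: K_conn; first by exists p; split.
  - exists (\bigcup_(z in T) ball z mesh).
      by apply: bigcup_open => z _; exact: ball_open.
    apply/seteqP; split=> y.
      by move=> [Ky Ty]; split=> //; exists y => //; exact: ballxx chain_mesh_gt0.
    by move=> [Ky [z Tz /ball_near]]; apply: T_near.
  - exists (closure T); first exact: closed_closure.
    apply/seteqP; split=> y.
      by move=> [Ky Ty]; split=> // B /nbhs_singleton By; exists y.
    move=> [Ky cl]; have [z [Tz /ball_sym /ball_near]] := cl _ (nbhsx_ballx y mesh chain_mesh_gt0).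
    exact: T_near.
by move=> q Kq; have [] : T q by rewrite TK.
Qed.

Lemma enorm_le_chain p q (F : 'rV[R]_d -> 'rV[R]_d) beta :
  connected K -> K p -> K q ->
  (forall a b, K a -> K b -> enorm (b - a) <= eps -> enorm (F b - F a) <= beta) ->
  enorm (F q - F p) <= ncells%:R * beta.
Proof.
move=> K_conn Kp Kq F_near.
have near_same a z : K a -> K z -> cell z = cell a -> enorm (z - a) <= eps.
  by move=> Ka Kz /(enorm_le_cell Kz Ka) /le_trans; apply; have := eps_gt0; lra.
have beta_ge0 : 0 <= beta.
  by apply: le_trans (enorm_ge0 _) (F_near p p Kp Kp (near_same p p Kp Kp erefl)).
have along s a : K a -> path cell_adj (cell a) s ->
    forall z, K z -> cell z = last (cell a) s -> enorm (F z - F a) <= (size s).+1%:R * beta.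
  elim: s a => [|c s IH] a Ka /=.
    by move=> _ z Kz za; rewrite mul1r; apply: F_near; last exact: near_same.
  move=> /andP[/asboolP[a' [b [Ka' Kb a'a <- ba']]] path_s] z Kz zs.
  have Fba : enorm (F b - F a) <= beta.
    apply: F_near => //; apply: le_trans (enorm_distD _ a' _) _.
    have := enorm_le_cell Ka' Ka a'a; have := eps_gt0; lra.
  apply: le_trans (enorm_distD _ (F b) _) _.
  by rewrite -natr1 mulrDl mul1r lerD // IH.
have /connectP[s path_s qs] := connect_cell_adj K_conn Kp Kq.
move: qs; case: (shortenP path_s) => s' path_s' uniq_s' _ qs'.
apply: le_trans (along _ _ Kp path_s' _ Kq qs') _.
rewrite ler_wpM2r // ler_nat -[(size s').+1]/(size (cell p :: s')).
by rewrite -(card_uniqP uniq_s'); exact: max_card.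
Qed.

End ConnectedChains.

Arguments ncells : clear implicits.

Section DirectionalDerivatives.
Context {R : realType} {U V W : normedModType R}.

Lemma derive_snd (G : U -> V * W) a v : derivable G a v ->
  derivable (fun p => (G p).2) a v /\ 'D_v (fun p => (G p).2) a = ('D_v G a).2.
Proof.
move=> /cvg_ex[l Gl].
have snd_l : (fun h : R => h^-1 *: (((fun p => (G p).2) \o shift a) (h *: v) - (G a).2))
    @ 0^' --> l.2.
  exact: cvg_comp Gl cvg_snd.
split; first by apply/cvg_ex; exists l.2.
by rewrite /derive (cvg_lim _ snd_l) // (cvg_lim _ Gl).
Qed.

Lemma derive_along_line (G : U -> W) (e a : U) (t : R) :
  derivable G (t *: e + a) e ->
  derivable (fun s : R => G (s *: e + a)) t 1 /\
  'D_1 (fun s : R => G (s *: e + a)) t = 'D_e G (t *: e + a).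
Proof.
have quotients_eq : (fun h : R => h^-1 *: (((fun s : R => G (s *: e + a)) \o shift t) (h *: 1)
      - G (t *: e + a))) =
    (fun h : R => h^-1 *: ((G \o shift (t *: e + a)) (h *: e) - G (t *: e + a))).
  apply: funext => h /=; congr (_ *: (G _ - _)).
  by rewrite /shift /= scalerDl addrA; congr (_ *: _ + _ + _); rewrite /GRing.scale /= mulr1.
by move=> dG; rewrite /derivable /derive quotients_eq.
Qed.

End DirectionalDerivatives.

Lemma Gsize_le {R : realType} {d : nat} (A : set (Pt R d)) (D : R) :
  (forall s y0 y y', connected_component (fiber A s) y0 y ->
     connected_component (fiber A s) y0 y' -> enorm (y - y') <= D) ->
  (Gsize A <= (D / 2)%:E)%E.
Proof.
move=> D_ub; apply: ge_ereal_sup => _ [s [y0 [_ ->]]].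
apply: ge_ereal_sup => _ [y [y' [Cy [Cy' ->]]]].
by rewrite lee_fin ler_pM2r //; exact: D_ub Cy Cy'.
Qed.

Fixpoint Hn_inv (R : realType) (d : nat) (Omega : Type) (theta : R -> Omega -> Omega)
    (ginv : Omega -> Pt R d -> Pt R d) (t1 : R) (n : nat) (w : Omega)
    : Pt R d -> Pt R d :=
  match n with
  | 0 => id
  | n'.+1 => Hn_inv theta ginv t1 n' w \o ginv (iter n' (theta t1) w)
  end.

Section TimeOneMapIterates.
Context {R : realType} {d : nat} {Omega : Type} (theta : R -> Omega -> Omega)
  (Gam : R -> Omega -> Pt R d -> Pt R d) (X : Omega -> set (Pt R d))
  (Y : Omega -> set 'rV[R]_d) (t1 : R) (ginv : Omega -> Pt R d -> Pt R d).
Hypothesis Gam_shift : forall w s y, Y w y -> (Gam t1 w (s, y)).1 = s + 1.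
Hypothesis XY : forall w s y, X w (s, y) -> Y w y.
Hypothesis Gam_X : forall w, Gam t1 w @` X w = X (theta t1 w).
Hypothesis GamK : forall w, cancel (Gam t1 w) (ginv w).
Hypothesis Gam_diff : forall w p, differentiable (Gam t1 w) p.
Hypothesis ginv_cont : forall w, continuous (ginv w).

Local Notation H := (Hn theta Gam t1).
Local Notation Hinv := (Hn_inv theta ginv t1).
Local Notation "w `+ n" := (iter n (theta t1) w) (at level 50).

Lemma HnD a b w p : H (a + b) w p = H b (w `+ a) (H a w p).
Proof. by elim: b => [|b IH]; rewrite ?addn0 // addnS /= IH addnC iterD. Qed.

Lemma Hn_X_shift n w p : X w p -> X (w `+ n) (H n w p) /\ (H n w p).1 = p.1 + n%:R.
Proof.
move=> Xp; elim: n => [|n [IH1 IH2]]; first by rewrite addr0.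
split; first by rewrite /= -Gam_X; exists (H n w p).
move: IH1 IH2 => /=; case: (H n w p) => s y /= Xsy ->.
by rewrite Gam_shift -?natr1 ?addrA //; exact: XY Xsy.
Qed.

Lemma Hn_onto_X n w q : X (w `+ n) q -> exists2 p, X w p & H n w p = q.
Proof.
elim: n q => [|n IH] q /=; first by exists q.
rewrite -Gam_X => -[q' Xq' <-].
by have [p Xp <-] := IH _ Xq'; exists p.
Qed.

Lemma HnK n w : cancel (H n w) (Hinv n w).
Proof. by elim: n => [|n IH] p //=; rewrite GamK IH. Qed.

Lemma continuous_Hn_inv n w : continuous (Hinv n w).
Proof.
elim: n => [|n IH] /= x; first exact: cvg_id.
by apply: continuous_comp; [exact: ginv_cont | exact: IH].
Qed.

Lemma differentiable_Hn n w p : differentiable (H n w) p.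
Proof.
elim: n p => [|n IH] p /=; first exact: ex_diff.
by apply: differentiable_comp; [exact: IH | exact: Gam_diff].
Qed.

Variables (n0 : nat) (lam eps1 : R).

Definition fibre_contracting (w : Omega) := forall p, Bnbhd (X w) eps1 p ->
  forall v, enorm (Dy (gn theta Gam t1 n0 w) p v) <= lam * enorm v.

Hypothesis lam_ge0 : 0 <= lam.

Lemma Hn_block_contraction w (a b : Pt R d) : fibre_contracting w ->
  X w a -> a.1 = b.1 -> enorm (b.2 - a.2) <= eps1 ->
  enorm ((H n0 w b).2 - (H n0 w a).2) <= lam * enorm (b.2 - a.2).
Proof.
case: a b => [s a] [s' b] /= contr Xa <- ba.
pose V : Pt R d := (0, b - a).
have dG q : derivable (gn theta Gam t1 n0 w) q V.
  by have [] := derive_snd (diff_derivable (differentiable_Hn n0 w q) (v := V)).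
have -> : (s, b) = 1 *: V + (s, a).
  by rewrite scale1r; apply: injective_projections; rewrite /= ?add0r ?subrK.
rewrite -[in X in _ - X](add0r (s, a)) -[in X in _ - X](scale0r V).
apply: (@MVT_enorm R d (fun t : R => gn theta Gam t1 n0 w (t *: V + (s, a)))).
  by move=> t; have [] := derive_along_line (dG (t *: V + (s, a))).
move=> t /andP[t_ge0 t_le1].
have [_ ->] := derive_along_line (dG (t *: V + (s, a))); apply: contr.
exists a; split.
  by have -> : (t *: V + (s, a)).1 = s by change (t *: (0 : R) + s = s); rewrite scaler0 add0r.
have -> : (t *: V + (s, a)).2 - a = t *: (b - a).
  by change (t *: (b - a) + a - a = t *: (b - a)); rewrite addrK.
by rewrite enormZ ger0_norm // (le_trans _ ba) // ler_piMl ?enorm_ge0.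
Qed.

Hypothesis lam_le1 : lam <= 1.
Hypothesis eps1_gt0 : 0 < eps1.

Lemma Hn_blocks_contraction w s (a b : 'rV[R]_d) k :
  (forall j, (j < k)%N -> fibre_contracting (w `+ j * n0)) ->
  X w (s, a) -> X w (s, b) -> enorm (b - a) <= eps1 ->
  enorm ((H (k * n0) w (s, b)).2 - (H (k * n0) w (s, a)).2) <= lam ^+ k * enorm (b - a).
Proof.
move=> contr Xa Xb ba; elim: k contr => [|k IH] contr; first by rewrite mul0n expr0 mul1r.
rewrite mulSnr !HnD.
have [XA A1] := Hn_X_shift (k * n0) Xa; have [XB B1] := Hn_X_shift (k * n0) Xb.
have lamk_le1 : lam ^+ k <= 1 by rewrite exprn_ile1.
have BA := IH (fun j jk => contr j (ltnW jk)).
apply: le_trans (Hn_block_contraction (contr k (ltnSn k)) XA _ _) _.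
- by rewrite A1 B1.
- by apply: le_trans BA (le_trans _ ba); rewrite ler_piMl ?enorm_ge0.
- by rewrite exprS -mulrA ler_wpM2l.
Qed.

(* A connected piece of a fibre at time [k n0] is pulled back by [H (k n0)] to a
   connected set of fibre points at time 0 of norm at most [rho]; along an
   [eps1]-chain of bounded length, each step is contracted by [lam ^+ k]. *)
Lemma enorm_le_connected_fibre w k s (C : set 'rV[R]_d) rho y y' :
  (forall j, (j < k)%N -> fibre_contracting (w `+ j * n0)) ->
  (forall z, Y w z -> enorm z <= rho) ->
  connected C -> C `<=` fiber (X (w `+ k * n0)) s -> C y -> C y' ->
  enorm (y' - y) <= (ncells R d rho eps1)%:R * (lam ^+ k * eps1).
Proof.
move=> contr Y_le C_conn CX Cy Cy'.
set m := (k * n0)%N; set s0 := s - m%:R.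
pose pull (z : 'rV[R]_d) := (Hinv m w (s, z)).2.
have pullP z : C z -> X w (s0, pull z) /\ H m w (s0, pull z) = (s, z).
  move=> Cz; have [[s1 z1] Xp Hp] := Hn_onto_X (CX _ Cz).
  have s1E : s1 = s0 by have [_] := Hn_X_shift m Xp; rewrite Hp /= /s0 => ->; rewrite addrK.
  have z1E : pull z = z1 by rewrite /pull -Hp HnK.
  by rewrite z1E -s1E Hp.
have K_conn : connected (pull @` C).
  apply: connected_continuous_connected C_conn _; apply: continuous_subspaceT => z.
  apply: (@continuous_comp _ _ _ _ snd z) cvg_snd.
  apply: (@continuous_comp _ _ _ (fun z => (s, z) : Pt R d)).
    have := @cvg_pair _ _ _ (nbhs z) (nbhs s) (nbhs z) _ _ _ (fun=> s) id (cvg_cst s) cvg_id.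
    by apply; exact: nbhs_filter.
  exact: continuous_Hn_inv.
have K_le z : (pull @` C) z -> enorm z <= rho.
  by move=> [z1 Cz1 <-]; apply/Y_le/XY; exact: (pullP _ Cz1).1.
have := @enorm_le_chain R d _ rho eps1 eps1_gt0 K_le _ _
  (fun z => (H m w (s0, z)).2) (lam ^+ k * eps1) K_conn
  (ex_intro2 _ _ y Cy erefl) (ex_intro2 _ _ y' Cy' erefl).
rewrite (pullP _ Cy).2 (pullP _ Cy').2; apply.
move=> _ _ [a Ca <-] [b Cb <-] ba.
apply: le_trans (Hn_blocks_contraction contr (pullP _ Ca).1 (pullP _ Cb).1 ba) _.
by rewrite ler_wpM2l ?exprn_ge0.
Qed.

Lemma Gsize_le_pullback w k rho :
  (forall j, (j < k)%N -> fibre_contracting (w `+ j * n0)) ->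
  (forall z, Y w z -> enorm z <= rho) ->
  (Gsize (X (w `+ k * n0)) <= ((ncells R d rho eps1)%:R * (lam ^+ k * eps1) / 2)%:E)%E.
Proof.
move=> contr Y_le; apply: Gsize_le => s y0 y y' Cy Cy'.
apply: (enorm_le_connected_fibre contr Y_le _ _ Cy' Cy).
- exact: component_connected.
- exact: connected_component_sub.
Qed.

End TimeOneMapIterates.

Lemma fibre_contracting_le {R : realType} {d : nat} {Omega : Type}
    (theta : R -> Omega -> Omega) (Gam : R -> Omega -> Pt R d -> Pt R d)
    (X : Omega -> set (Pt R d)) t1 n0 (lam lam' eps1 : R) w : lam <= lam' ->
  fibre_contracting theta Gam X t1 n0 lam eps1 w ->
  fibre_contracting theta Gam X t1 n0 lam' eps1 w.
Proof.
move=> lam_le contr p Bp v; apply: le_trans (contr p Bp v) _.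
by rewrite ler_wpM2r ?enorm_ge0.
Qed.

Section BoundedRandomSets.
Context {R : realType} {d : nat} {dO : measure_display} {Omega : measurableType dO}
  (Y : Omega -> set 'rV[R]_d).

Definition grid_point (c : {ffun 'I_d -> int}) : 'rV[R]_d :=
  \row_i ((c i)%:~R / (2 * d.+1%:R)).

Lemma grid_point_approx y : exists c, enorm (grid_point c - y) <= 1 / 2.
Proof.
have D_gt0 : 0 < 2 * d.+1%:R :> R by rewrite mulr_gt0 // ltr0n.
exists [ffun i => Num.floor (y ord0 i * (2 * d.+1%:R))].
apply: le_trans (enorm_le_sum_coord _) _.
apply: (@le_trans _ _ (\sum_(i < d) (2 * d.+1%:R)^-1)).
  apply: ler_sum => i _; rewrite !mxE ffunE.
  have lo := real_floor_le (num_real (y ord0 i * (2 * d.+1%:R))).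
  have hi := real_floorD1_gt (num_real (y ord0 i * (2 * d.+1%:R))).
  rewrite intrD in hi; set f := (Num.floor _)%:~R in lo hi *.
  have f_le : f / (2 * d.+1%:R) <= y ord0 i by rewrite ler_pdivrMr.
  have f_gt : y ord0 i < (f + 1) / (2 * d.+1%:R) by rewrite ltr_pdivlMr.
  rewrite mulrDl mul1r in f_gt; rewrite ler_norml.
  move: f_le f_gt; move: (f / (2 * d.+1%:R)) ((2 * d.+1%:R)^-1) => fD Dinv; lra.
rewrite sumr_const card_ord -[X in X <= _]mulr_natr.
apply: (@le_trans _ _ ((2 * d.+1%:R)^-1 * d.+1%:R)).
  by rewrite ler_wpM2l ?invr_ge0 ?(ltW D_gt0) // ler_nat.
by rewrite invfM -mulrA mulVf ?mulr1 ?mul1r // lt0r_neq0 ?ltr0n.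
Qed.

(* A measurable enlargement of [{w | Y w is not inside the ball of radius n}]:
   it only involves the countably many measurable maps [dist_rv (grid_point c) \o Y]. *)
Definition reaches_beyond (n : nat) : set Omega :=
  \bigcup_(c in [set: {ffun 'I_d -> int}])
    [set w | n%:R - 1 < enorm (grid_point c) /\ dist_rv (grid_point c) (Y w) < 1].

Lemma dist_rv_le x (K : set 'rV[R]_d) k : K k -> dist_rv x K <= enorm (x - k).
Proof.
move=> Kk; apply: ge_inf; last by exists k.
by exists 0 => _ [k' _ <-]; exact: enorm_ge0.
Qed.

Lemma dist_rv_ltP x (K : set 'rV[R]_d) r : K !=set0 -> dist_rv x K < r ->
  exists2 k, K k & enorm (x - k) < r.
Proof.
move=> [k0 Kk0] /inf_lt[]; first by exists (enorm (x - k0)), k0.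
by move=> _ [k Kk <-] xk; exists k.
Qed.

Lemma not_reaches_beyond n w : ~ reaches_beyond n w -> forall z, Y w z -> enorm z <= n%:R.
Proof.
move=> not_far z Yz; rewrite leNgt; apply/negP => z_gt; apply: not_far.
have [c cz] := grid_point_approx z; exists c => //; split.
  have := enorm_distD z (grid_point c) 0; rewrite !subr0 enorm_distC; lra.
by apply: le_lt_trans (dist_rv_le _ Yz) _; lra.
Qed.

Lemma nonincreasing_reaches_beyond : nonincreasing_seq reaches_beyond.
Proof.
move=> n m nm; rewrite subsetEset => w [c _ [c_gt dc]]; exists c => //; split=> //.
by apply: le_lt_trans c_gt; rewrite lerD2r ler_nat.
Qed.

Hypothesis Y_compact : forall w, Y w !=set0 /\ compact (Y w).
Hypothesis Y_meas : forall x, measurable_fun setT (fun w => dist_rv x (Y w)).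

Lemma measurable_reaches_beyond n : measurable (reaches_beyond n).
Proof.
apply: countable_bigcupT_measurable => // c.
set S := [set w | _ /\ _].
have [c_gt|c_le] := pselect (n%:R - 1 < enorm (grid_point c)); last first.
  by rewrite (_ : S = set0) //; apply/seteqP; split=> w // [].
rewrite (_ : S = setT `&` (fun w => dist_rv (grid_point c) (Y w)) @^-1` `]-oo, 1[).
  by apply: Y_meas => //; exact: measurable_itv.
by apply/seteqP; split=> w /=; rewrite in_itv /=; [case | case].
Qed.

Lemma bigcap_reaches_beyond : \bigcap_n reaches_beyond n = set0.
Proof.
apply/seteqP; split=> w // far.
have [M [_ M_ub]] := compact_bounded (Y_compact w).2.
pose n := Num.truncn (d%:R * (M + 1) + 3).
have [c _ [c_gt dc]] := far n I.
have [y Yy cy] := dist_rv_ltP (Y_compact w).1 dc.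
have y_le : enorm y <= d%:R * (M + 1).
  apply: le_trans (enorm_le_mx_norm y) _; rewrite ler_wpM2l ?ler0n //.
  by apply: M_ub Yy; rewrite ltrDl.
have := enorm_distD (grid_point c) y 0; rewrite !subr0.
have : d%:R * (M + 1) + 3 < n.+1%:R by exact: truncnS_gt.
rewrite -natr1; lra.
Qed.

End BoundedRandomSets.

Section Flows.
Context {R : realType} {Omega : Type} (theta : R -> Omega -> Omega).
Hypothesis theta0 : forall w, theta 0 w = w.
Hypothesis thetaD : forall t u w, theta (t + u) w = theta t (theta u w).

Lemma iter_theta t1 n w : iter n (theta t1) w = theta (n%:R * t1) w.
Proof.
by elim: n w => [|n IH] w /=; rewrite ?mul0r ?theta0 // IH -thetaD -natr1 mulrDl mul1r addrC.
Qed.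

Lemma iter_theta_back t1 n i w : (i <= n)%N ->
  iter i (theta t1) (theta (- (n%:R * t1)) w) = theta (- ((n - i)%:R * t1)) w.
Proof.
by move=> i_le; rewrite iter_theta -thetaD natrB // mulrBl opprB addrC.
Qed.

Lemma iter_theta_backK t1 n w : iter n (theta t1) (theta (- (n%:R * t1)) w) = w.
Proof.
by rewrite iter_theta_back // subnn mul0r oppr0 theta0.
Qed.

Lemma good_iter_theta_back (good N : set Omega) t1 n i w :
  ~` good `<=` N -> ~ (\bigcup_j theta (- (j%:R * t1)) @^-1` N) w -> (i <= n)%N ->
  good (iter i (theta t1) (theta (- (n%:R * t1)) w)).
Proof.
move=> bad_N not_N i_le; rewrite iter_theta_back //; apply: contrapT => bad.
by apply: not_N; exists (n - i)%N => //; exact: bad_N.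
Qed.

End Flows.

Section MetricDynamicalSystems.
Context {R : realType} {dO : measure_display} {Omega : measurableType dO}
  (P : probability Omega R) (theta : R -> Omega -> Omega).
Hypothesis mds : metric_dynamical_system P theta.

Lemma measurable_theta_preimage t (A : set Omega) :
  measurable A -> measurable (theta t @^-1` A).
Proof. by have [theta_meas _] := mds; move=> mA; rewrite -[_ @^-1` _]setTI; apply: theta_meas. Qed.

Lemma negligible_bigcup_theta_preimage (t : nat -> R) (N : set Omega) :
  measurable N -> P N = 0%E -> P.-negligible (\bigcup_j theta (t j) @^-1` N).
Proof.
move=> mN PN; apply: negligible_bigcup => j.
exists (theta (t j) @^-1` N); split=> //; first exact: measurable_theta_preimage.
by have [_ [theta_pres _]] := mds; exact: etrans (theta_pres _ _ mN) PN.
Qed.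

(* Measure preservation turns the preimages into sets of vanishing measure. *)
Lemma negligible_bigcap_theta_preimage (t : nat -> R) (B : nat -> set Omega) :
  (forall n, measurable (B n)) -> nonincreasing_seq B -> \bigcap_n B n = set0 ->
  P.-negligible (\bigcap_n theta (t n) @^-1` B n).
Proof.
move=> mB B_decr B_cap.
have m_cap : measurable (\bigcap_n theta (t n) @^-1` B n).
  by apply: bigcapT_measurable => n; exact: measurable_theta_preimage.
apply/negligibleP => //; apply/eqP; rewrite eq_le measure_ge0 andbT.
have PB0 : P \o B @ \oo --> 0%E.
  rewrite -(measure0 P) -B_cap; apply: nonincreasing_cvg_mu => //.
  - exact: le_lt_trans (probability_le1 P (mB 0%N)) (ltry _).
  - exact: bigcapT_measurable.
have [_ [theta_pres _]] := mds.
have : (P (\bigcap_n theta (t n) @^-1` B n) <= lim (P \o B @ \oo))%E.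
  apply: lime_ge; first by apply/cvg_ex; exists 0%E.
  near=> n; rewrite /= -(theta_pres (t n) _ (mB n)).
  by apply: le_measure; rewrite ?inE //; [exact: measurable_theta_preimage | exact: bigcap_inf].
by rewrite (cvg_lim _ PB0).
Unshelve. all: by end_near.
Qed.

End MetricDynamicalSystems.

Lemma exists_expr_lt (R : realType) (C z e : R) : 0 < C -> 0 <= z < 1 -> 0 < e ->
  exists k : nat, C * z ^+ k < e.
Proof.
move=> C_gt0 /andP[z_ge0 z_lt1] e_gt0.
have z_lt1' : `|z| < 1 by rewrite ger0_norm.
have [N _ zN] := cvg_expr z_lt1' (nbhsx_ballx 0 (e / C) (divr_gt0 e_gt0 C_gt0)).
exists N; have := zN N (leqnn N).
by rewrite /= /ball /= sub0r normrN ger0_norm ?exprn_ge0 // ltr_pdivlMr // mulrC.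
Qed.

Theorem lemma3p2 (R : realType) (d : nat) (dO : measure_display)
    (Omega : measurableType dO) (P : probability Omega R)
    (theta : R -> Omega -> Omega) (Gam : R -> Omega -> Pt R d -> Pt R d)
    (Y : Omega -> set 'rV[R]_d) (X : Omega -> set (Pt R d))
    (t1 bstar delta1 L1 lam eps1 : R) (n0 : nat) :
  metric_dynamical_system P theta ->
  C1_perfect_cocycle theta Gam ->
  cond_i theta Gam Y X t1 bstar ->
  cond_ii X delta1 L1 ->
  cond_iii P theta Gam X t1 lam eps1 n0 ->
  forall l : R, 0 < l ->
    P.-negligible [set w | (l%:E <= Gsize (X w))%E].
Proof.
move=> mds [_ [_ [_ [_ [diffeo _]]]]] [[Y_compact Y_meas] [_ [Gam_Y [_ [XY [Gam_X _]]]]]] _.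
move=> [lam_lt1 [eps1_gt0 [[N0 [mN0 PN0 N0_sub]] _]]] l l_gt0.
have [_ [_ [theta0 thetaD]]] := mds.
pose lam' := Num.max lam 0.
have lam'_ge0 : 0 <= lam' by rewrite le_max lexx orbT.
have lam'_lt1 : lam' < 1 by rewrite gt_max lam_lt1 ltr01.
have [ginv ginvP] := choice (fun w => diffeo w t1).
have k_ex n : exists kn : nat, (ncells R d n%:R eps1)%:R * eps1 * lam' ^+ kn < l.
  by apply: exists_expr_lt; rewrite ?lam'_ge0 // mulr_gt0 // ltr0n ncells_gt0.
have [k k_small] := choice k_ex.
pose back n := theta (- ((k n * n0)%:R * t1)).
pose NN := \bigcup_j theta (- (j%:R * t1)) @^-1` N0.
suff large_sub : [set w | (l%:E <= Gsize (X w))%E] `<=`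
    NN `|` \bigcap_n back n @^-1` reaches_beyond Y n.
  apply: (negligibleS large_sub); apply: negligibleU.
    exact: negligible_bigcup_theta_preimage.
  apply: negligible_bigcap_theta_preimage => //.
  - exact: measurable_reaches_beyond.
  - exact: nonincreasing_reaches_beyond.
  - exact: bigcap_reaches_beyond.
move=> w /= w_large; have [|not_NN] := pselect (NN w); [by left | right=> n _].
apply: contrapT => /not_reaches_beyond Y_le.
have contr j : (j < k n)%N ->
    fibre_contracting theta Gam X t1 n0 lam' eps1 (iter (j * n0) (theta t1) (back n w)).
  move=> jk; apply: fibre_contracting_le (good_iter_theta_back theta0 thetaD N0_sub not_NN _).
    by rewrite le_max lexx.
  by rewrite leq_mul2r (ltnW jk) orbT.
have := Gsize_le_pullback (fun w s y Yy => (Gam_Y w s y Yy).1) XY (Gam_X t1)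
  (fun w => (ginvP w).1) (fun w => (ginvP w).2.2.1.1)
  (fun w x => differentiable_continuous ((ginvP w).2.2.2.1 x))
  lam'_ge0 (ltW lam'_lt1) eps1_gt0 contr Y_le.
rewrite /back (iter_theta_backK theta0 thetaD) => /(le_trans w_large); rewrite lee_fin.
have := k_small n; lra.
Qed.
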